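(* Let $\ell>0$ and let $M=\mathbb R\times\{x\in\mathbb R^2: (x^1)^2+(x^2)^2<\ell^2\}$ with coordinates $(t,x^1,x^2)$. Let $\lambda(x)=\log\frac{2}{1-|x|^2/\ell^2}$, $\kappa=-\lambda$, and let $\phi(t,x)$ be an arbitrary smooth function. Take the Newton-Cartan background $$\tau_\mu dx^\mu=e^{\kappa}dt,\qquad e_\mu{}^adx^\mu=e^{\lambda}dx^a,\qquad m_\mu dx^\mu=\phi\, e^{\kappa}dt,$$ and background fields $u=0$, $v=0$, and $v_\mu$ determined by $v_0=0$, $(v^1,v^2)=\tfrac32\big(x^2/\ell^2,\,-x^1/\ell^2\big)$. Then the system (S$_-$) of Theorem 1 has two linearly independent nowhere-vanishing solutions, namely $\zeta_-=\exp(\tfrac{\pi}{8}\gamma_0)\zeta_0$ for any constant Majorana spinor $\zeta_0\neq 0$.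
   Context: Conventions: $\tau^\mu,e^\mu{}_a$ are the projective inverses ($\tau^\mu\tau_\mu=1$, $\tau^\mu e_\mu{}^a=0$, $e^\mu{}_a\tau_\mu=0$, $e^\mu{}_ae_\mu{}^b=\delta^b_a$); $v_0=\tau^\mu v_\mu$, $v_a=e^\mu{}_av_\mu$, $v^a=v_a$, so $v_\mu=\tau_\mu v_0+e_\mu{}^av_a$. $\epsilon_{12}=\epsilon^{12}=1$. $\tau_{\mu\nu}=2\partial_{[\mu}\tau_{\nu]}$, $\tau_{ab}=e^\mu{}_ae^\nu{}_b\tau_{\mu\nu}$, $\tau_{0\mu}=\tau^\nu\tau_{\nu\mu}$, $\tau_\mu{}^a=\tau_{\mu\nu}e^{\nu a}$, $\tau_\mu{}^0=\tau_{0\mu}$. Spin connection $\omega_\mu{}^{ab} = 2e^{\nu[a}\partial_{[\mu}e_{\nu]}{}^{b]} - e_\mu{}^ce^{\nu a}e^{\rho b}\partial_{[\nu}e_{\rho]c} - \tau_\mu e^{\nu a}e^{\rho b}\partial_{[\nu}m_{\rho]}$. Gamma matrices: $2\times2$, $\gamma_0^2=-\mathbb1$, $\{\gamma_a,\gamma_b\}=2\delta_{ab}$, $\{\gamma_0,\gamma_a\}=0$, $\gamma^a=\gamma_a$, $\gamma^0=-\gamma_0$, $\gamma_{ab}=\epsilon_{ab}\gamma_0$, $\gamma_{a0}=\epsilon_{ab}\gamma_b$; Majorana condition $\zeta^*=\mathrm i\mathcal C_3\gamma^0\zeta$ with $\mathcal C_3^T=-\mathcal C_3$, $\gamma^T=-\mathcal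 C_3\gamma\mathcal C_3^{-1}$. $D_\mu\zeta=\partial_\mu\zeta+\tfrac14\omega_\mu{}^{ab}\gamma_{ab}\zeta$. System (S$_-$) for a commuting Majorana spinor $\zeta_-$: $(\tfrac43 v-\epsilon^{ab}\tau_{ab})\gamma_0\zeta_-=0$; $(\tfrac32\tau_\mu{}^a\gamma_{a0}+e_\mu{}^av\gamma_a+\tau_\mu v^a\gamma_a+\mathrm{Re}(u)\tau_\mu\gamma_0+\mathrm{Im}(u)\tau_\mu)\zeta_-=0$; $D_\mu\zeta_-=(\tfrac14\tau_\mu{}^0+\tfrac12v_\mu\gamma_0-\tfrac16e_\mu{}^av_b\gamma_a\gamma^b\gamma_0-\tfrac16\mathrm{Re}(u)e_\mu{}^a\gamma_a+\tfrac16\mathrm{Im}(u)e_\mu{}^a\gamma_{a0})\zeta_-$. *)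

From Stdlib Require Import Reals List.
From Coquelicot Require Import Coquelicot.
Open Scope R_scope.

(** Points of R^3 with coordinates (t, x^1, x^2), indexed mu = 0,1,2. *)
Definition pt := (R * R * R)%type.
Definition coord (mu : nat) (p : pt) : R :=
  match mu with 0 => fst (fst p) | 1 => snd (fst p) | _ => snd p end.
Definition shift (mu : nat) (h : R) (p : pt) : pt :=
  match mu with
  | 0 => (fst (fst p) + h, snd (fst p), snd p)
  | 1 => (fst (fst p), snd (fst p) + h, snd p)
  | 2 => (fst (fst p), snd (fst p), snd p + h)
  | _ => p end.
Definition pder (mu : nat) (f : pt -> R) (p : pt) : R :=
  Derive (fun h => f (shift mu h p)) 0.
Definition ex_pder (mu : nat) (f : pt -> R) (p : pt) : Prop :=
  ex_derive (fun h => f (shift mu h p)) 0.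

Fixpoint iter_pder (l : list nat) (f : pt -> R) : pt -> R :=
  match l with nil => f | mu :: l' => pder mu (iter_pder l' f) end.

Definition smooth_on (U : pt -> Prop) (f : pt -> R) : Prop :=
  forall (l : list nat) (p : pt), U p ->
    continuous (iter_pder l f) p /\
    forall mu, (mu < 3)%nat -> ex_pder mu (iter_pder l f) p.

Definition sum3 (f : nat -> R) : R := f 0%nat + f 1%nat + f 2%nat.
Definition sum2 (f : nat -> R) : R := f 1%nat + f 2%nat.
Definition kron (i j : nat) : R := if Nat.eqb i j then 1 else 0.
Definition eps (a b : nat) : R :=
  match a, b with 1%nat, 2%nat => 1 | 2%nat, 1%nat => -1 | _, _ => 0 end.

Record mat2 := M2 { m11 : R; m12 : R; m21 : R; m22 : R }.
Definition spinor := (R * R)%type.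
Definition mmul (A B : mat2) : mat2 :=
  M2 (m11 A * m11 B + m12 A * m21 B) (m11 A * m12 B + m12 A * m22 B)
     (m21 A * m11 B + m22 A * m21 B) (m21 A * m12 B + m22 A * m22 B).
Definition madd (A B : mat2) : mat2 :=
  M2 (m11 A + m11 B) (m12 A + m12 B) (m21 A + m21 B) (m22 A + m22 B).
Definition mscal (c : R) (A : mat2) : mat2 :=
  M2 (c * m11 A) (c * m12 A) (c * m21 A) (c * m22 A).
Definition mzero : mat2 := M2 0 0 0 0.
Definition mid : mat2 := M2 1 0 0 1.
Definition msum3 (f : nat -> mat2) : mat2 := madd (madd (f 0%nat) (f 1%nat)) (f 2%nat).
Definition msum2 (f : nat -> mat2) : mat2 := madd (f 1%nat) (f 2%nat).
Definition mapp (A : mat2) (z : spinor) : spinor :=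
  (m11 A * fst z + m12 A * snd z, m21 A * fst z + m22 A * snd z).

(** Gamma matrices: a real representation with gamma_1 = sigma_3,
    gamma_2 = sigma_1, gamma_0 = gamma_1 gamma_2, so that gamma_0^2 = -1,
    {gamma_a,gamma_b} = 2 delta_ab, {gamma_0,gamma_a} = 0 and
    gamma_12 = gamma_0 (i.e. gamma_ab = eps_ab gamma_0). *)
Definition gam (a : nat) : mat2 :=
  match a with
  | 1%nat => M2 1 0 0 (-1)
  | 2%nat => M2 0 1 1 0
  | _ => M2 0 1 (-1) 0 end.
Definition gam0 : mat2 := gam 0.
Definition gamUp (a : nat) : mat2 :=
  match a with 0%nat => mscal (-1) gam0 | _ => gam a end.
Definition gam2 (A B : nat) : mat2 :=
  mscal (1/2) (madd (mmul (gam A) (gam B)) (mscal (-1) (mmul (gam B) (gam A)))).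

(** Majorana condition: with C_3 = -i (0 1; -1 0) (antisymmetric, and
    gamma^T = - C_3 gamma C_3^{-1} for all gamma above) the condition
    zeta^* = i C_3 gamma^0 zeta reads zeta^* = zeta, i.e. Majorana spinors
    are exactly the real two-component spinors: type spinor = R*R. *)

Section NC.
(** Newton-Cartan data: tau_mu, e_mu^a, m_mu, and projective inverses
    tau^mu (tauI), e^mu_a (eI); background fields v, u (via Re/Im),
    v_mu given by components v_0 (v0) and v_a (va). *)
Variables (tau : nat -> pt -> R) (e : nat -> nat -> pt -> R) (m : nat -> pt -> R)
  (tauI : nat -> pt -> R) (eI : nat -> nat -> pt -> R)
  (v : pt -> R) (reU imU : pt -> R) (v0 : pt -> R) (va : nat -> pt -> R).

Definition is_proj_inverse (p : pt) : Prop :=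
  sum3 (fun mu => tauI mu p * tau mu p) = 1 /\
  (forall a, (1 <= a <= 2)%nat -> sum3 (fun mu => tauI mu p * e mu a p) = 0) /\
  (forall a, (1 <= a <= 2)%nat -> sum3 (fun mu => eI mu a p * tau mu p) = 0) /\
  (forall a b, (1 <= a <= 2)%nat -> (1 <= b <= 2)%nat ->
     sum3 (fun mu => eI mu a p * e mu b p) = kron a b).

Definition vmu (mu : nat) (p : pt) : R :=
  tau mu p * v0 p + sum2 (fun a => e mu a p * va a p).

Definition tau2 (mu nu : nat) (p : pt) : R :=
  pder mu (tau nu) p - pder nu (tau mu) p.
Definition tau_ab (a b : nat) (p : pt) : R :=
  sum3 (fun mu => sum3 (fun nu => eI mu a p * eI nu b p * tau2 mu nu p)).
Definition tau_0mu (mu : nat) (p : pt) : R :=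
  sum3 (fun nu => tauI nu p * tau2 nu mu p).
Definition tau_mu_a (mu a : nat) (p : pt) : R :=
  sum3 (fun nu => tau2 mu nu p * eI nu a p).

Definition asd (f : nat -> pt -> R) (mu nu : nat) (p : pt) : R :=
  (pder mu (f nu) p - pder nu (f mu) p) / 2.

Definition omegaA (mu a b : nat) (p : pt) : R :=
  sum3 (fun nu => eI nu a p * asd (fun rho => e rho b) mu nu p).
Definition omega (mu a b : nat) (p : pt) : R :=
  (omegaA mu a b p - omegaA mu b a p)
  - sum2 (fun c => e mu c p *
       sum3 (fun nu => sum3 (fun rho =>
         eI nu a p * eI rho b p * asd (fun s => e s c) nu rho p)))
  - tau mu p * sum3 (fun nu => sum3 (fun rho =>
         eI nu a p * eI rho b p * asd m nu rho p)).

Variable zeta : pt -> spinor.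

Definition Dzeta (mu : nat) (p : pt) : spinor :=
  let dz := (pder mu (fun q => fst (zeta q)) p, pder mu (fun q => snd (zeta q)) p) in
  let w := mapp (mscal (1/4) (msum2 (fun a => msum2 (fun b =>
              mscal (omega mu a b p) (gam2 a b))))) (zeta p) in
  (fst dz + fst w, snd dz + snd w).

Definition eq1 (p : pt) : Prop :=
  mapp (mscal (4/3 * v p - sum2 (fun a => sum2 (fun b => eps a b * tau_ab a b p))) gam0)
       (zeta p) = (0, 0).

Definition eq2 (mu : nat) (p : pt) : Prop :=
  mapp (madd (madd (madd (madd
     (mscal (3/2) (msum2 (fun a => mscal (tau_mu_a mu a p) (gam2 a 0))))
     (msum2 (fun a => mscal (e mu a p * v p) (gam a))))
     (msum2 (fun a => mscal (tau mu p * va a p) (gam a))))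
     (mscal (reU p * tau mu p) gam0))
     (mscal (imU p * tau mu p) mid)) (zeta p) = (0, 0).

Definition eq3 (mu : nat) (p : pt) : Prop :=
  Dzeta mu p =
  mapp (madd (madd (madd (madd
     (mscal (1/4 * tau_0mu mu p) mid)
     (mscal (1/2 * vmu mu p) gam0))
     (mscal (-1/6) (msum2 (fun a => msum2 (fun b =>
        mscal (e mu a p * va b p) (mmul (mmul (gam a) (gamUp b)) gam0))))))
     (mscal (-1/6 * reU p) (msum2 (fun a => mscal (e mu a p) (gam a)))))
     (mscal (1/6 * imU p) (msum2 (fun a => mscal (e mu a p) (gam2 a 0)))))
   (zeta p).

Definition S_minus (p : pt) : Prop :=
  eq1 p /\ (forall mu, (mu < 3)%nat -> eq2 mu p /\ eq3 mu p).
End NC.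

Definition inM (l : R) (p : pt) : Prop :=
  coord 1 p ^ 2 + coord 2 p ^ 2 < l ^ 2.
Definition lam (l : R) (p : pt) : R :=
  ln (2 / (1 - (coord 1 p ^ 2 + coord 2 p ^ 2) / l ^ 2)).
Definition kap (l : R) (p : pt) : R := - lam l p.
Definition bg_tau (l : R) (mu : nat) (p : pt) : R :=
  if Nat.eqb mu 0 then exp (kap l p) else 0.
Definition bg_e (l : R) (mu a : nat) (p : pt) : R :=
  if Nat.eqb mu a then exp (lam l p) else 0.
Definition bg_m (l : R) (phi : pt -> R) (mu : nat) (p : pt) : R :=
  if Nat.eqb mu 0 then phi p * exp (kap l p) else 0.
Definition bg_va (l : R) (a : nat) (p : pt) : R :=
  match a with
  | 1%nat => 3/2 * (coord 2 p / l ^ 2)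
  | 2%nat => 3/2 * (- coord 1 p / l ^ 2)
  | _ => 0 end.

(** exp(pi/8 gamma_0) = cos(pi/8) 1 + sin(pi/8) gamma_0, since gamma_0^2 = -1 *)
Definition exp_pi8_gam0 : mat2 := madd (mscal (cos (PI/8)) mid) (mscal (sin (PI/8)) gam0).

From Stdlib Require Import Reals Lra Psatz.
From Coquelicot Require Import Coquelicot.
Open Scope R_scope.

(* The point of the argument is that on this background EVERY constant
   Majorana spinor solves (S_-): each of the three equations reduces, at a
   point of the disk, to an identity between 2x2 real matrices.  In particular
   exp(pi/8 gamma_0) zeta0 is a solution, and it is nowhere zero because
   exp(pi/8 gamma_0) is a rotation; the constant spinors (1,0) and (0,1) give
   two linearly independent solutions. *)

Lemma pder_invariant (mu : nat) (f : pt -> R) (p : pt) :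
  (forall h, f (shift mu h p) = f p) -> pder mu f p = 0.
Proof.
intro hf; unfold pder.
rewrite (Derive_ext _ (fun _ => f p)) by exact hf.
apply Derive_const.
Qed.

Lemma pder_bg_tau (l : R) (mu nu : nat) (p : pt) :
  pder mu (bg_tau l nu) p =
  if Nat.eqb nu 0 then pder mu (fun q => exp (kap l q)) p else 0.
Proof. unfold bg_tau; destruct (Nat.eqb nu 0); [reflexivity | now apply pder_invariant]. Qed.

Lemma pder_bg_e (l : R) (mu nu a : nat) (p : pt) :
  pder mu (bg_e l nu a) p =
  if Nat.eqb nu a then pder mu (fun q => exp (lam l q)) p else 0.
Proof. unfold bg_e; destruct (Nat.eqb nu a); [reflexivity | now apply pder_invariant]. Qed.

Lemma pder_bg_m (l : R) (phi : pt -> R) (mu nu : nat) (p : pt) :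
  pder mu (bg_m l phi nu) p =
  if Nat.eqb nu 0 then pder mu (fun q => phi q * exp (kap l q)) p else 0.
Proof. unfold bg_m; destruct (Nat.eqb nu 0); [reflexivity | now apply pder_invariant]. Qed.

Lemma mapp_entrywise (A B : mat2) (z : spinor) :
  m11 A = m11 B -> m12 A = m12 B -> m21 A = m21 B -> m22 A = m22 B ->
  mapp A z = mapp B z.
Proof. destruct A, B; unfold mapp; cbn; intros -> -> -> ->; reflexivity. Qed.

Lemma mapp_null (A : mat2) (z : spinor) :
  m11 A = 0 -> m12 A = 0 -> m21 A = 0 -> m22 A = 0 -> mapp A z = (0, 0).
Proof. destruct A, z; unfold mapp; cbn; intros -> -> -> ->; f_equal; ring. Qed.

Lemma Dzeta_const (tau : nat -> pt -> R) (e : nat -> nat -> pt -> R) (m : nat -> pt -> R)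
  (eI : nat -> nat -> pt -> R) (z : spinor) (mu : nat) (p : pt) :
  Dzeta tau e m eI (fun _ => z) mu p =
  mapp (mscal (1/4) (msum2 (fun a => msum2 (fun b => mscal (omega tau e m eI mu a b p) (gam2 a b))))) z.
Proof.
unfold Dzeta.
rewrite !(pder_invariant mu (fun _ => _)) by reflexivity.
cbn [fst snd]; rewrite !Rplus_0_l; destruct (mapp _ z); reflexivity.
Qed.

Lemma solve_scaled (x A c : R) : A <> 0 -> x * A = c -> x = c / A.
Proof. intros hA hx. subst c. field. exact hA. Qed.

(* Reads off the unknown [x] from an equation [h] of the form
   [... + x * C + ... = c] whose other terms carry a factor 0. *)
Ltac read h C :=
  cbn in h; rewrite ?Rmult_0_r, ?Rplus_0_l, ?Rplus_0_r in h;
  rewrite (solve_scaled _ C _ ltac:(assumption) h); cbn; field; assumption.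

Lemma proj_inverse_diagonal (tau : nat -> pt -> R) (e : nat -> nat -> pt -> R)
  (tauI : nat -> pt -> R) (eI : nat -> nat -> pt -> R) (p : pt) (A B : R) :
  A <> 0 -> B <> 0 ->
  (forall mu, tau mu p = if Nat.eqb mu 0 then A else 0) ->
  (forall mu a, e mu a p = if Nat.eqb mu a then B else 0) ->
  is_proj_inverse tau e tauI eI p ->
  (forall mu, (mu < 3)%nat -> tauI mu p = if Nat.eqb mu 0 then / A else 0) /\
  (forall mu a, (mu < 3)%nat -> (1 <= a <= 2)%nat ->
     eI mu a p = if Nat.eqb mu a then / B else 0).
Proof.
intros hA hB htau he [hnorm [htauI_e [heI_tau heI_e]]].
unfold sum3, kron in *; rewrite !htau in hnorm, heI_tau.
setoid_rewrite he in htauI_e; setoid_rewrite he in heI_e.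
split.
- intros mu hmu; destruct mu as [|[|[|mu]]]; try lia.
  + read hnorm A.
  + specialize (htauI_e 1%nat ltac:(lia)); read htauI_e B.
  + specialize (htauI_e 2%nat ltac:(lia)); read htauI_e B.
- intros mu a hmu ha.
  assert (ha' : a = 1%nat \/ a = 2%nat) by lia.
  destruct mu as [|[|[|mu]]]; try lia; destruct ha' as [-> | ->].
  + specialize (heI_tau 1%nat ltac:(lia)); read heI_tau A.
  + specialize (heI_tau 2%nat ltac:(lia)); read heI_tau A.
  + specialize (heI_e 1%nat 1%nat ltac:(lia) ltac:(lia)); read heI_e B.
  + specialize (heI_e 2%nat 1%nat ltac:(lia) ltac:(lia)); read heI_e B.
  + specialize (heI_e 1%nat 2%nat ltac:(lia) ltac:(lia)); read heI_e B.
  + specialize (heI_e 2%nat 2%nat ltac:(lia) ltac:(lia)); read heI_e B.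
Qed.

Lemma bg_proj_inverse (l : R) (tauI : nat -> pt -> R) (eI : nat -> nat -> pt -> R) (p : pt) :
  is_proj_inverse (bg_tau l) (bg_e l) tauI eI p ->
  (forall mu, (mu < 3)%nat -> tauI mu p = if Nat.eqb mu 0 then exp (lam l p) else 0) /\
  (forall mu a, (mu < 3)%nat -> (1 <= a <= 2)%nat ->
     eI mu a p = if Nat.eqb mu a then exp (kap l p) else 0).
Proof.
intro hinv.
assert (inv_kap : / exp (kap l p) = exp (lam l p)) by (unfold kap; now rewrite exp_Ropp, Rinv_inv).
assert (inv_lam : / exp (lam l p) = exp (kap l p)) by (unfold kap; now rewrite exp_Ropp).
destruct (proj_inverse_diagonal _ _ _ _ p (exp (kap l p)) (exp (lam l p))
            (Rgt_not_eq _ _ (exp_pos _)) (Rgt_not_eq _ _ (exp_pos _))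
            (fun _ => eq_refl) (fun _ _ => eq_refl) hinv) as [htauI heI].
split; [intros mu hmu; rewrite htauI | intros mu a hmu ha; rewrite heI]; try assumption.
- now rewrite inv_kap.
- now rewrite inv_lam.
Qed.

(* exp(pi/8 gamma_0) is a rotation of the spinor plane, hence injective. *)
Lemma exp_pi8_gam0_nonzero (z : spinor) : z <> (0, 0) -> mapp exp_pi8_gam0 z <> (0, 0).
Proof.
destruct z as [a b]; intros hz hrot; apply hz.
unfold mapp, exp_pi8_gam0, madd, mscal, mid, gam0, gam in hrot; cbn in hrot.
injection hrot as h1 h2.
pose proof (sin2_cos2 (PI / 8)) as hsc; unfold Rsqr in hsc.
assert (ha : a = 0) by nra; assert (hb : b = 0) by nra; now subst.
Qed.

Section PoincareDisk.
Variables (l t x1 x2 : R).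
Hypotheses (hl : 0 < l) (hM : x1^2 + x2^2 < l^2).

Local Notation p := (t, x1, x2).
Local Notation D := (l^2 - x1^2 - x2^2).

(* 1 - |x|^2/l^2 > 0, in the normal form produced by auto_derive. *)
Lemma ln_arg_pos : 0 < 1 + - ((x1 * (x1 * 1) + x2 * (x2 * 1)) * / (l * (l * 1))).
Proof.
replace (1 + - ((x1 * (x1 * 1) + x2 * (x2 * 1)) * / (l * (l * 1)))) with (D / l^2)
  by (field; lra).
apply Rdiv_lt_0_compat; nra.
Qed.

Lemma exp_lam : exp (lam l p) = 2 * l^2 / D.
Proof.
unfold lam, coord; cbn [fst snd]. rewrite exp_ln.
- field; repeat split; nra.
- replace (2 / (1 - (x1 ^ 2 + x2 ^ 2) / l ^ 2)) with (2 * l^2 / D) by (field; repeat split; nra).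
  apply Rdiv_lt_0_compat; nra.
Qed.

Lemma exp_kap : exp (kap l p) = D / (2 * l^2).
Proof. unfold kap. rewrite exp_Ropp, exp_lam. field. repeat split; nra. Qed.

(* Differentiates e^lambda or e^kappa along x^1 or x^2 and simplifies. *)
Ltac disk_derive :=
  unfold pder, kap, lam, coord; simpl; apply is_derive_unique; auto_derive;
  rewrite ?Rplus_0_r; pose proof ln_arg_pos;
  [ repeat split; try lra; apply Rmult_lt_0_compat; [lra | apply Rinv_0_lt_compat; lra]
  | rewrite ?exp_Ropp, exp_ln by (apply Rmult_lt_0_compat; [lra | apply Rinv_0_lt_compat; lra]);
    field; repeat split; nra ].

(* d_a e^lambda = e^lambda d_a lambda with d_a lambda = 2 x^a / (l^2 - |x|^2). *)
Lemma pder_exp_lam :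
  pder 0 (fun q => exp (lam l q)) p = 0 /\
  pder 1 (fun q => exp (lam l q)) p = 4 * l^2 * x1 / D^2 /\
  pder 2 (fun q => exp (lam l q)) p = 4 * l^2 * x2 / D^2.
Proof. split; [now apply pder_invariant | split; disk_derive]. Qed.

Lemma pder_exp_kap :
  pder 0 (fun q => exp (kap l q)) p = 0 /\
  pder 1 (fun q => exp (kap l q)) p = - x1 / l^2 /\
  pder 2 (fun q => exp (kap l q)) p = - x2 / l^2.
Proof. split; [now apply pder_invariant | split; disk_derive]. Qed.

Section Frame.
Variables (phi : pt -> R) (tauI : nat -> pt -> R) (eI : nat -> nat -> pt -> R).
Hypothesis (htauI : forall mu, (mu < 3)%nat -> tauI mu p = if Nat.eqb mu 0 then exp (lam l p) else 0).
Hypothesis (heI : forall mu a, (mu < 3)%nat -> (1 <= a <= 2)%nat ->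
     eI mu a p = if Nat.eqb mu a then exp (kap l p) else 0).

(* Expands the index sums in a field-strength component and substitutes all
   frame values and derivatives at p. *)
Ltac expand_background :=
  unfold sum3, sum2, asd; cbv beta;
  rewrite ?pder_bg_tau, ?pder_bg_e, ?pder_bg_m;
  unfold bg_tau, bg_e, bg_m; cbn [Nat.eqb];
  rewrite ?htauI, ?heI by lia; cbn [Nat.eqb];
  destruct pder_exp_lam as (dl0 & dl1 & dl2);
  destruct pder_exp_kap as (dk0 & dk1 & dk2);
  rewrite ?dl0, ?dl1, ?dl2, ?dk0, ?dk1, ?dk2, ?exp_lam, ?exp_kap;
  clear dl0 dl1 dl2 dk0 dk1 dk2.

Lemma twistless : tau_ab (bg_tau l) eI 1 2 p = 0 /\ tau_ab (bg_tau l) eI 2 1 p = 0.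
Proof. unfold tau_ab, tau2. split; expand_background; field; lra. Qed.

(* tau_0^a = e^kappa x^a / l^2, the component balanced by v^a in the second equation. *)
Lemma torsion_time :
  tau_mu_a (bg_tau l) eI 0 1 p = exp (kap l p) * x1 / l^2 /\
  tau_mu_a (bg_tau l) eI 0 2 p = exp (kap l p) * x2 / l^2.
Proof. unfold tau_mu_a, tau2. split; expand_background; field; lra. Qed.

Lemma torsion_space (b a : nat) : (1 <= b <= 2)%nat -> (1 <= a <= 2)%nat ->
  tau_mu_a (bg_tau l) eI b a p = 0.
Proof.
intros hb ha; unfold tau_mu_a, tau2.
destruct b as [|[|[|b]]]; try lia; destruct a as [|[|[|a]]]; try lia;
  expand_background; field; lra.
Qed.

(* The acceleration tau_0mu = d_mu lambda (tau depends on x only through e^kappa). *)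
Lemma acceleration :
  tau_0mu (bg_tau l) tauI 0 p = 0 /\
  tau_0mu (bg_tau l) tauI 1 p = 2 * x1 / D /\
  tau_0mu (bg_tau l) tauI 2 p = 2 * x2 / D.
Proof. unfold tau_0mu, tau2. repeat split; expand_background; field; lra. Qed.

(* omega^{12} = d_2 lambda dx^1 - d_1 lambda dx^2, the spin connection of the
   hyperbolic metric e^{2 lambda} dx^2. *)
Definition omega12_disk (mu : nat) : R :=
  match mu with 1%nat => 2 * x2 / D | 2%nat => - 2 * x1 / D | _ => 0 end.

(* The spin connection is omega_mu^{ab} = eps^{ab} omega_mu^{12}; the mass gauge
   field m does not contribute since dm has no purely spatial component. *)
Lemma spin_connection (mu a b : nat) : (mu < 3)%nat -> (1 <= a <= 2)%nat -> (1 <= b <= 2)%nat ->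
  omega (bg_tau l) (bg_e l) (bg_m l phi) eI mu a b p = eps a b * omega12_disk mu.
Proof.
intros hmu ha hb; unfold omega, omegaA.
destruct mu as [|[|[|mu]]]; try lia; destruct a as [|[|[|a]]]; try lia;
  destruct b as [|[|[|b]]]; try lia;
  expand_background; unfold eps, omega12_disk; field; lra.
Qed.

Ltac entrywise :=
  cbn [m11 m12 m21 m22 madd mscal mmul msum2 gam2 gam0 gamUp gam mid fst snd].

(* First equation: v = 0 and tau_ab = 0. *)
Lemma eq1_const (z : spinor) : eq1 (bg_tau l) eI (fun _ => 0) (fun _ => z) p.
Proof.
unfold eq1, sum2, eps; destruct twistless as [-> ->].
apply mapp_null; entrywise; ring.
Qed.

(* Second equation: the torsion term (3/2) tau_0^a gamma_{a0} cancels tau_0 v^a gamma_a. *)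
Lemma eq2_const (z : spinor) (mu : nat) : (mu < 3)%nat ->
  eq2 (bg_tau l) (bg_e l) eI (fun _ => 0) (fun _ => 0) (fun _ => 0) (bg_va l) (fun _ => z) mu p.
Proof.
intro hmu; unfold eq2, msum2.
destruct mu as [|[|[|mu]]]; try lia;
  [destruct torsion_time as [-> ->] | rewrite !torsion_space by lia ..];
  apply mapp_null; unfold bg_tau, bg_e, bg_va, coord; cbn [Nat.eqb fst snd]; entrywise;
  rewrite ?exp_kap; field; lra.
Qed.

Lemma eq3_const (z : spinor) (mu : nat) : (mu < 3)%nat ->
  eq3 (bg_tau l) (bg_e l) (bg_m l phi) tauI eI (fun _ => 0) (fun _ => 0) (fun _ => 0) (bg_va l)
      (fun _ => z) mu p.
Proof.
intro hmu; unfold eq3; rewrite Dzeta_const.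
apply mapp_entrywise; unfold msum2; rewrite !spin_connection by lia;
destruct acceleration as (acc0 & acc1 & acc2);
destruct mu as [|[|[|mu]]]; try lia; rewrite ?acc0, ?acc1, ?acc2;
unfold vmu, sum2, bg_tau, bg_e, bg_va, coord, eps, omega12_disk; cbn [Nat.eqb fst snd]; entrywise;
rewrite ?exp_lam, ?exp_kap; field; lra.
Qed.

Lemma constant_spinor_solves (z : spinor) :
  S_minus (bg_tau l) (bg_e l) (bg_m l phi) tauI eI
    (fun _ => 0) (fun _ => 0) (fun _ => 0) (fun _ => 0) (bg_va l) (fun _ => z) p.
Proof.
split; [apply eq1_const | intros mu hmu; split; [apply eq2_const | apply eq3_const]; exact hmu].
Qed.
End Frame.
End PoincareDisk.


Theorem mainTheorem5 (l : R) (hl : 0 < l) (phi : pt -> R)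
  (hphi : smooth_on (inM l) phi)
  (tauI : nat -> pt -> R) (eI : nat -> nat -> pt -> R)
  (hinv : forall p, inM l p ->
     is_proj_inverse (bg_tau l) (bg_e l) tauI eI p) :
  (forall zeta0 : spinor, zeta0 <> (0, 0) ->
     let zeta := fun _ : pt => mapp exp_pi8_gam0 zeta0 in
     forall p, inM l p ->
       S_minus (bg_tau l) (bg_e l) (bg_m l phi) tauI eI
         (fun _ => 0) (fun _ => 0) (fun _ => 0) (fun _ => 0) (bg_va l) zeta p
       /\ zeta p <> (0, 0))
  /\
  (exists zeta1 zeta2 : pt -> spinor,
     (forall p, inM l p ->
        S_minus (bg_tau l) (bg_e l) (bg_m l phi) tauI eI
          (fun _ => 0) (fun _ => 0) (fun _ => 0) (fun _ => 0) (bg_va l) zeta1 p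
        /\ S_minus (bg_tau l) (bg_e l) (bg_m l phi) tauI eI
          (fun _ => 0) (fun _ => 0) (fun _ => 0) (fun _ => 0) (bg_va l) zeta2 p
        /\ zeta1 p <> (0, 0) /\ zeta2 p <> (0, 0)) /\
     (forall c1 c2 : R,
        (forall p, inM l p ->
           (c1 * fst (zeta1 p) + c2 * fst (zeta2 p),
            c1 * snd (zeta1 p) + c2 * snd (zeta2 p)) = (0, 0)) ->
        c1 = 0 /\ c2 = 0)).
Proof.
assert (solves : forall z p, inM l p ->
  S_minus (bg_tau l) (bg_e l) (bg_m l phi) tauI eI
    (fun _ => 0) (fun _ => 0) (fun _ => 0) (fun _ => 0) (bg_va l) (fun _ => z) p).
{ intros z [[t x1] x2] hp.
  destruct (bg_proj_inverse _ _ _ _ (hinv _ hp)) as [htauI heI].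
  exact (constant_spinor_solves l t x1 x2 hl hp phi tauI eI htauI heI z). }
split.
- intros z0 hz0 zeta p hp.
  split; [apply solves, hp | apply exp_pi8_gam0_nonzero, hz0].
- exists (fun _ => (1, 0)), (fun _ => (0, 1)); split.
  + intros p hp; split; [|split; [|split]]; try (apply solves, hp); intro h; injection h; lra.
  + intros c1 c2 hdep.
    assert (origin : inM l (0, 0, 0)) by (unfold inM, coord; cbn; nra).
    specialize (hdep _ origin); cbn in hdep; injection hdep as h1 h2; lra.
Qed.
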